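(* For every positive integer $M$ and every real $s>M$, $$\frac{1}{(\pi/2)^M}\int_{\{u\in\mathbb R^M:\ \|u\|_1>s\}}\ \prod_{j=1}^M\frac{du_j}{(1+u_j^2)^2}\le\frac{M}{(s-M)^2}.$$
   Context: Here $\pi=3.14159\ldots$ and $\|u\|_1=\sum_{j=1}^M|u_j|$. *)

From HB Require Import structures.
From mathcomp Require Import all_boot all_order all_algebra.
From mathcomp Require Import all_classical all_reals all_analysis.
Set Implicit Arguments. Unset Strict Implicit. Unset Printing Implicit Defensive.
Import Order.TTheory GRing.Theory Num.Theory.
Local Open Scope ring_scope.
Local Open Scope ereal_scope.

(* Iterated Lebesgue integral over R^n of a function of the coordinate list
   u = [:: u_1; ...; u_n] (a point of R^n, represented as a seq R of length n):
   iter_lebesgue n F = \int du_1 ... \int du_n F [:: u_1; ...; u_n].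
   For nonnegative measurable F this is the Lebesgue integral over R^n
   (Tonelli); MathComp-Analysis has no n-ary product Lebesgue measure. *)
Fixpoint iter_lebesgue (R : realType) (n : nat) (F : seq R -> \bar R) : \bar R :=
  match n with
  | 0%N => F [::]
  | n'.+1 => \int[@lebesgue_measure R]_x iter_lebesgue n' (fun u => F (x :: u))
  end.

From HB Require Import structures.
From mathcomp Require Import all_boot all_order all_algebra.
From mathcomp Require Import all_classical all_reals all_analysis.
From mathcomp Require Import ring lra measurable_realfun.
Import Order.TTheory GRing.Theory Num.Theory.
Import numFieldNormedType.Exports.
Local Open Scope ring_scope.
Local Open Scope classical_set_scope.

(* Chebyshev's inequality.  Normalised by (pi/2)^M, the weight (1+x^2)^-2 is a
   product probability density whose coordinates satisfy E[x^2] = 1 and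
   E|x| = q <= 1 (from 2|x| <= 1 + x^2).  Hence the l1 norm S has mean M q and
   variance M (1 - q^2) <= M, so P(S > s) <= M / (s - M q)^2 <= M / (s - M)^2.
   The moments of S are obtained by integrating a quadratic polynomial in S one
   coordinate at a time, which keeps the family of integrands closed. *)

Section iter_lebesgue_monotone.
Context {R : realType}.
Local Open Scope ereal_scope.
Local Notation mu := (@lebesgue_measure R).

(* No measurability is needed here: both integrals are suprema over the
   nonnegative simple functions lying below the integrand. *)
Lemma ge0_le_integralT_nonmeasurable (f g : R -> \bar R) :
  (forall x, 0 <= f x) -> (forall x, f x <= g x) ->
  \int[mu]_x f x <= \int[mu]_x g x.
Proof.
move=> f0 fg; have g0 x : 0 <= g x by exact: le_trans (f0 x) (fg x).
rewrite ge0_integralE; last by move=> x _; exact: f0.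
rewrite [leRHS]ge0_integralE; last by move=> x _; exact: g0.
rewrite !patch_setT; apply: ereal_sup_le => _ [h hf <-].
by exists h => //= x; exact: le_trans (hf x) (fg x).
Qed.

Lemma iter_lebesgue_ge0 n (F : seq R -> \bar R) :
  (forall u, 0 <= F u) -> 0 <= iter_lebesgue n F.
Proof.
elim: n F => [|n IHn] F F0 //=.
by apply: integral_ge0 => x _; exact: IHn.
Qed.

Lemma le_iter_lebesgue n (F G : seq R -> \bar R) :
  (forall u, 0 <= F u) -> (forall u, F u <= G u) ->
  iter_lebesgue n F <= iter_lebesgue n G.
Proof.
elim: n F G => [|n IHn] F G F0 FG //=.
apply: ge0_le_integralT_nonmeasurable => x; first exact: iter_lebesgue_ge0.
exact: IHn.
Qed.

End iter_lebesgue_monotone.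

Section cauchy_square_moments.
Context {R : realType}.
Local Notation mu := (@lebesgue_measure R).

Lemma oneDsqr_gt0 (x : R) : 0 < oneDsqr x.
Proof. exact: lt_le_trans ltr01 (oneDsqr_ge1 x). Qed.

Lemma integral_oneDsqrV : (\int[mu]_x ((oneDsqr x)^-1)%:E = pi%:E)%E.
Proof.
rewrite ge0_symfun_integralT.
- by rewrite -set_itvcy integral0y_oneDsqr -EFinM mulrC divfK.
- by move=> x; rewrite invr_ge0 ltW ?oneDsqr_gt0.
- exact: continuous_oneDsqrV.
- by move=> x; rewrite /= /oneDsqr sqrrN.
Qed.

Lemma integrable_oneDsqrV : mu.-integrable setT (fun x => ((oneDsqr x)^-1)%:E).
Proof.
apply/integrableP; split.
  by apply/measurable_EFinP; apply: continuous_measurable_fun; exact: continuous_oneDsqrV.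
under eq_integral do rewrite gee0_abs ?lee_fin ?invr_ge0 ?ltW ?oneDsqr_gt0//.
by rewrite integral_oneDsqrV ltry.
Qed.

Definition weight (x : R) : R := ((1 + x ^+ 2) ^+ 2)^-1.

Lemma weightE x : weight x = (oneDsqr x)^-1 ^+ 2.
Proof. by rewrite /weight exprVn. Qed.

Lemma weight_ge0 x : 0 <= weight x.
Proof. by rewrite weightE sqr_ge0. Qed.

Lemma oneDsqr_weight x : oneDsqr x * weight x = (oneDsqr x)^-1.
Proof. by rewrite weightE expr2 mulrA divff ?mul1r // gt_eqF ?oneDsqr_gt0. Qed.

Lemma continuous_weight : continuous weight.
Proof.
have -> : weight = (fun x => (oneDsqr x)^-1 * (oneDsqr x)^-1).
  by apply/funext => x; rewrite weightE expr2.
by move=> x; apply: cvgM; exact: continuous_oneDsqrV.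
Qed.

Lemma integrable_mul_weight (h : R -> R) : continuous h ->
  (forall x, `|h x| <= oneDsqr x) ->
  mu.-integrable setT (fun x => (h x * weight x)%:E).
Proof.
move=> ch hle; apply: le_integrable integrable_oneDsqrV => //.
  apply/measurable_EFinP; apply: continuous_measurable_fun => x.
  by apply: cvgM; [exact: ch | exact: continuous_weight].
move=> x _; rewrite /= lee_fin normrM (ger0_norm (weight_ge0 x)).
have := ler_wpM2r (weight_ge0 x) (hle x); rewrite oneDsqr_weight => hx.
exact: le_trans hx (ler_norm _).
Qed.

Let scaleRE (a b : R) : a *: b = a * b. Proof. by []. Qed.

Definition weight_primitive (x : R) : R := (x / oneDsqr x + atan x) / 2.

Lemma is_derive_weight_primitive (x : R) : is_derive x 1 weight_primitive (weight x).
Proof.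
have nz : oneDsqr x != 0 by rewrite gt_eqF ?oneDsqr_gt0.
have d1 : is_derive x 1 oneDsqr (2 * x).
  by apply: is_derive_eq; rewrite scaleRE; ring.
have := @is_deriveV _ oneDsqr _ _ _ nz d1.
have := is_derive1_atan x.
move=> datan dinv; rewrite /weight_primitive; apply: is_derive_eq.
by rewrite !scaleRE /weight /oneDsqr in nz *; field.
Qed.

Lemma cvgy_div_oneDsqr : (fun x => x / oneDsqr x) x @[x --> +oo] --> (0 : R).
Proof.
have cvgV : (fun x : R => x^-1) x @[x --> +oo] --> (0 : R).
  by apply/gtr0_cvgV0; [near=> y | exact: cvg_id].
apply: (@squeeze_cvgr _ _ _ _ (cst 0) (fun x : R => x^-1)) => //; last first.
  exact: cvg_cst.
near=> y; have y0 : 0 < y by near: y; exact: nbhs_pinfty_gt.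
rewrite /= divr_ge0 ?ltW ?oneDsqr_gt0 //= ltr_pdivrMr ?oneDsqr_gt0 //.
by rewrite /oneDsqr mulrDr mulr1 expr2 mulrA mulVf ?gt_eqF // mul1r ltrDr invr_gt0.
Unshelve. all: by end_near.
Qed.

Lemma cvgy_weight_primitive : weight_primitive x @[x --> +oo] --> (pi / 4 : R).
Proof.
have -> : (pi / 4 : R) = (0 + pi / 2) / 2.
  by rewrite add0r -mulrA -invfM -natrM.
exact: cvgM (cvgD cvgy_div_oneDsqr (@cvgy_atan R)) (cvg_cst _).
Qed.

Lemma integral_weight : (\int[mu]_x (weight x)%:E = (pi / 2)%:E)%E.
Proof.
have dF x := is_derive_weight_primitive x.
rewrite ge0_symfun_integralT; last 3 first.
- exact: weight_ge0.
- exact: continuous_weight.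
- by move=> x; rewrite /weight /= sqrrN.
rewrite -set_itvcy (ge0_continuous_FTC2y _ _ cvgy_weight_primitive).
- rewrite /weight_primitive atan0 mul0r add0r mul0r sube0 -EFinM.
  by congr EFin; field.
- by move=> x _; exact: weight_ge0.
- by apply: continuous_subspaceT; exact: continuous_weight.
- by move=> x _; exact: ex_derive.
- apply/cvg_at_right_filter/differentiable_continuous/derivable1_diffP.
  exact: ex_derive.
- by move=> x _; rewrite derive1E derive_val.
Qed.

Lemma twice_norm_le_oneDsqr (x : R) : 2 * `|x| <= oneDsqr x.
Proof.
have := sqr_ge0 (`|x| - 1); rewrite /oneDsqr -(real_normK (num_real x)).
nra.
Qed.

Lemma integrable_weight : mu.-integrable setT (fun x => (weight x)%:E).
Proof.
under eq_fun do rewrite -[weight _]mul1r.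
by apply: integrable_mul_weight => [x|x]; [exact: cvg_cst | rewrite normr1 oneDsqr_ge1].
Qed.

Lemma integrable_abs_weight : mu.-integrable setT (fun x => (`|x| * weight x)%:E).
Proof.
apply: integrable_mul_weight => [x|x]; first exact: norm_continuous.
have := twice_norm_le_oneDsqr x; have := normr_ge0 x; rewrite normr_id; lra.
Qed.

Lemma integrable_sqr_weight : mu.-integrable setT (fun x => (x ^+ 2 * weight x)%:E).
Proof.
apply: integrable_mul_weight => [x|x]; first exact: exprn_continuous.
by rewrite ger0_norm ?sqr_ge0 // /oneDsqr lerDr.
Qed.

Lemma integral_sqr_weight : (\int[mu]_x (x ^+ 2 * weight x)%:E = (pi / 2)%:E)%E.
Proof.
have : (\int[mu]_x ((weight x)%:E + (x ^+ 2 * weight x)%:E) = pi%:E)%E.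
  rewrite -integral_oneDsqrV; apply: eq_integral => x _.
  by rewrite -EFinD -oneDsqr_weight /oneDsqr mulrDl mul1r.
rewrite integralD ?integrable_weight ?integrable_sqr_weight // integral_weight.
have /fineK <- := integrable_fin_num measurableT integrable_sqr_weight.
by rewrite -EFinD => -[pi_eq]; congr EFin; lra.
Qed.

Definition mean_abs : R := fine (\int[mu]_x (`|x| * weight x)%:E) / (pi / 2).

Lemma integral_abs_weight :
  (\int[mu]_x (`|x| * weight x)%:E = (mean_abs * (pi / 2))%:E)%E.
Proof.
rewrite /mean_abs divfK ?gt_eqF ?divr_gt0 ?pi_gt0 // fineK //.
exact: (integrable_fin_num _ integrable_abs_weight).
Qed.

Lemma mean_abs_ge0 : 0 <= mean_abs.
Proof.
apply: divr_ge0; last by rewrite divr_ge0 ?ltW ?pi_gt0.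
apply/fine_ge0/integral_ge0 => x _.
by rewrite lee_fin mulr_ge0 ?weight_ge0.
Qed.

Lemma mean_abs_le1 : mean_abs <= 1.
Proof.
have : (\int[mu]_x ((2 * (`|x| * weight x))%:E) <= \int[mu]_x ((oneDsqr x)^-1)%:E)%E.
  apply: le_integral => //; last 2 first.
  - exact: integrable_oneDsqrV.
  - move=> x _; rewrite lee_fin -oneDsqr_weight mulrA.
    by rewrite ler_wpM2r ?weight_ge0 ?twice_norm_le_oneDsqr.
  under eq_fun do rewrite EFinM.
  exact: integrableZl integrable_abs_weight.
under eq_integral do rewrite EFinM.
rewrite integralZl ?integrable_abs_weight // integral_abs_weight integral_oneDsqrV.
rewrite -EFinM lee_fin => h; have := pi_gt0 R; nra.
Qed.

Lemma integral_quadratic_weight (a b c : R) :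
  (\int[mu]_x (((a + b * `|x| + c * x ^+ 2) * weight x)%:E) =
   (pi / 2 * (a + b * mean_abs + c))%:E)%E.
Proof.
have iw := integrableZl measurableT a integrable_weight.
have ia := integrableZl measurableT b integrable_abs_weight.
have isq := integrableZl measurableT c integrable_sqr_weight.
have split x : ((a + b * `|x| + c * x ^+ 2) * weight x)%:E =
    (a%:E * (weight x)%:E + b%:E * (`|x| * weight x)%:E +
     c%:E * (x ^+ 2 * weight x)%:E)%E.
  by rewrite -!EFinM -!EFinD; congr EFin; ring.
under eq_integral do rewrite split.
rewrite integralD ?integrableD // integralD //.
rewrite !integralZl ?integrable_weight ?integrable_abs_weight ?integrable_sqr_weight //.
rewrite integral_weight integral_abs_weight integral_sqr_weight.
by rewrite -!EFinM -!EFinD; congr EFin; ring.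
Qed.

Definition prod_weight (u : seq R) : R := \prod_(x <- u) weight x.
Definition l1norm (u : seq R) : R := \sum_(x <- u) `|x|.

Lemma prod_weight_ge0 u : 0 <= prod_weight u.
Proof. by apply: prodr_ge0 => x _; exact: weight_ge0. Qed.

Lemma iter_lebesgue_quadratic n (a b c : R) :
  iter_lebesgue n
    (fun u => (prod_weight u * (a + b * l1norm u + c * l1norm u ^+ 2))%:E) =
  ((pi / 2) ^+ n *
     (a + b * (n%:R * mean_abs) + c * (n%:R + n%:R * (n%:R - 1) * mean_abs ^+ 2)))%:E.
Proof.
elim: n a b c => [|n IHn] a b c /=.
  by rewrite /prod_weight /l1norm !big_nil; congr EFin; ring.
under eq_integral => x _.
  rewrite (_ : (fun u => _) = fun u => (prod_weight u *
      (weight x * (a + b * `|x| + c * x ^+ 2) +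
       weight x * (b + 2 * c * `|x|) * l1norm u +
       weight x * c * l1norm u ^+ 2))%:E); last first.
    apply/funext => u; rewrite /prod_weight /l1norm !big_cons; congr EFin.
    rewrite -(real_normK (num_real x)); ring.
  rewrite IHn (_ : ((pi / 2) ^+ n *
     (weight x * (a + b * `|x| + c * x ^+ 2) +
      weight x * (b + 2 * c * `|x|) * (n%:R * mean_abs) +
      weight x * c * (n%:R + n%:R * (n%:R - 1) * mean_abs ^+ 2)))%:E =
    (((pi / 2) ^+ n * (a + b * (n%:R * mean_abs) +
                       c * (n%:R + n%:R * (n%:R - 1) * mean_abs ^+ 2)) +
      (pi / 2) ^+ n * (b + 2 * c * (n%:R * mean_abs)) * `|x| +
      (pi / 2) ^+ n * c * x ^+ 2) * weight x)%:E); last by congr EFin; ring.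
  over.
rewrite integral_quadratic_weight [(pi / 2) ^+ n.+1]exprS -[n.+1%:R]natr1; congr EFin; ring.
Qed.

Lemma iter_lebesgue_tail_le n (c s : R) : c < s ->
  (iter_lebesgue n (fun u => (if s < l1norm u then prod_weight u else 0)%:E) <=
   ((pi / 2) ^+ n * (n%:R * (1 - mean_abs ^+ 2) + (c - n%:R * mean_abs) ^+ 2)
      / (s - c) ^+ 2)%:E)%E.
Proof.
move=> cs; have d_gt0 : 0 < (s - c) ^+ 2 by rewrite exprn_gt0 ?subr_gt0.
set d := (s - c) ^+ 2 in d_gt0 *.
have chebyshev t : (if s < t then 1 else 0) <= (c ^+ 2 / d + (- 2 * c / d) * t + d^-1 * t ^+ 2).
  rewrite (_ : _ + _ = (t - c) ^+ 2 / d); last by field; rewrite gt_eqF.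
  case: ifPn => [st|_]; last by rewrite divr_ge0 ?sqr_ge0 ?ltW.
  have ct : c < t by exact: lt_trans cs st.
  rewrite ler_pdivlMr // mul1r /d ler_sqr ?nnegrE ?subr_ge0 ?(ltW cs) ?(ltW ct) //.
  by rewrite lerD2r ltW.
apply: le_trans (le_iter_lebesgue n _ (fun u => (prod_weight u *
    (c ^+ 2 / d + (- 2 * c / d) * l1norm u + d^-1 * l1norm u ^+ 2))%:E) _ _) _.
- by move=> u; case: ifP; rewrite lee_fin ?prod_weight_ge0.
- move=> u; have := chebyshev (l1norm u); rewrite lee_fin.
  case: ifP => _ h; last by rewrite mulr_ge0 ?prod_weight_ge0.
  by rewrite -[X in X <= _]mulr1 ler_wpM2l ?prod_weight_ge0.
rewrite iter_lebesgue_quadratic lee_fin le_eqVlt; apply/predU1P; left.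
by field; rewrite gt_eqF.
Qed.
End cauchy_square_moments.

Theorem lemma4 (R : realType) (M : nat) (s : R) :
  (0 < M)%N -> M%:R < s ->
  (((pi / 2) ^- M)%:E *
     iter_lebesgue M
       (fun u : seq R =>
          (if s < \sum_(x <- u) `|x| then \prod_(x <- u) ((1 + x ^+ 2) ^+ 2)^-1
           else 0)%:E) <= (M%:R / (s - M%:R) ^+ 2)%:E)%E.
Proof.
move=> _ Ms.
have q_ge0 := @mean_abs_ge0 R; have q_le1 := @mean_abs_le1 R.
have Mq_le : M%:R * mean_abs <= M%:R :> R by rewrite ler_piMr.
have sM_gt0 : 0 < s - M%:R by rewrite subr_gt0.
have sMq : s - M%:R <= s - M%:R * mean_abs :> R by rewrite lerD2l lerN2.
have sMq_gt0 := lt_le_trans sM_gt0 sMq.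
have p_gt0 : 0 < (pi / 2 : R) ^+ M by rewrite exprn_gt0 ?divr_gt0 ?pi_gt0.
have tail := @iter_lebesgue_tail_le R M _ _ (le_lt_trans Mq_le Ms).
apply: le_trans (lee_wpmul2l _ tail) _; first by rewrite lee_fin ltW ?invr_gt0.
rewrite -EFinM lee_fin subrr expr0n addr0.
rewrite (_ : (pi / 2) ^- M * _ = M%:R * (1 - mean_abs ^+ 2) / (s - M%:R * mean_abs) ^+ 2);
  last by field; rewrite (gt_eqF sMq_gt0) (gt_eqF p_gt0).
apply: (@ler_pM R); rewrite ?mulr_ge0 ?subr_ge0 ?invr_ge0 ?sqr_ge0 ?expr_le1 //.
  by rewrite ler_piMr // gerDl oppr_le0 sqr_ge0.
rewrite lef_pV2 ?posrE ?exprn_gt0 //.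
by rewrite ler_sqr ?nnegrE ?(ltW sM_gt0) ?(ltW sMq_gt0).
Qed.
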